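(* Let $(S,T)$ be a connected triangulated surface (closed or with boundary) with edges $e_1,\dots,e_m$ and admissible metric space $\Omega_u$, and let $\bar{\mathbf w}=(\bar w_1,\dots,\bar w_m)\in\mathbb{R}^m$. Suppose there exists $\bar{\mathbf u}\in\Omega_u$ whose cotangent edge weights are $\bar{\mathbf w}$, i.e. $w_i(\bar{\mathbf u})=\bar w_i$ for all $i$. Then $\bar{\mathbf u}$ is the unique global minimizer on $\Omega_u$ of the energy $$\mathcal{E}(\mathbf u)=\int_{(1,\dots,1)}^{\mathbf u}\sum_{i=1}^m\big(\bar w_i-w_i(\mu)\big)\,d\mu_i,$$ the integral being taken along any piecewise smooth path in $\Omega_u$.
   Context: Admissible metric space: $\Omega_u=\{u\in\mathbb{R}^m_{>0}: \sum_k u_k=m$, and for every face with edges $e_a,e_b,e_c$, $(\sqrt{u_a},\sqrt{u_b},\sqrt{u_c})$ satisfies the strict triangle inequalities$\}$; $u$ corresponds to the Euclidean polyhedral metric with edge lengths $d_k=\sqrt{2u_k}$. $w_i(u)$ is the cotangent edge weight of $e_i$ in that metric: for an interior edge with opposite angles $\alpha,\beta$ in its two adjacent faces, $w_i=\tfrac12(\cot\alpha+\cot\beta)$; for a boundary edge with opposite angle $\alpha$, $w_i=\tfrac12\cot\alpha$. *)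

From Stdlib Require Import Reals Lra List Arith.
Import ListNotations.
Open Scope R_scope.

Definition sumR (m : nat) (f : nat -> R) : R :=
  fold_right Rplus 0 (map f (seq 0 m)).

(* Edges are e_0,...,e_{m-1} (indices < m).  A face is given by the
   triple of its three edges (a,b,c). *)
Definition face := (nat * nat * nat)%type.

Definition face_edges (f : face) : list nat :=
  let '(a, b, c) := f in [a; b; c].

Definition edge_incidence (F : list face) (i : nat) : nat :=
  fold_right plus 0%nat
    (map (fun f => length (filter (fun e => Nat.eqb e i) (face_edges f))) F).

Definition faces_adjacent (F : list face) (x y : nat) : Prop :=
  (x < length F)%nat /\ (y < length F)%nat /\
  exists e, In e (face_edges (nth x F (0,0,0)%nat)) /\
            In e (face_edges (nth y F (0,0,0)%nat)).

(* Connected triangulated surface (closed or with boundary) with m edges and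
   face list F: every face has three distinct edges among e_0..e_{m-1};
   every edge lies on exactly one face side (boundary edge) or on exactly
   two face sides (interior edge); the face-adjacency graph is connected. *)
Definition triangulated_surface (m : nat) (F : list face) : Prop :=
  F <> nil /\
  (forall a b c, In (a, b, c) F ->
     (a < m)%nat /\ (b < m)%nat /\ (c < m)%nat /\ a <> b /\ b <> c /\ a <> c) /\
  (forall i, (i < m)%nat -> edge_incidence F i = 1%nat \/ edge_incidence F i = 2%nat) /\
  (forall x y, (x < length F)%nat -> (y < length F)%nat ->
     Relation_Operators.clos_refl_trans nat (faces_adjacent F) x y).

Definition strict_triangle (x y z : R) : Prop :=
  x < y + z /\ y < x + z /\ z < x + y.

Definition in_Omega (m : nat) (F : list face) (u : nat -> R) : Prop :=
  (forall k, (k < m)%nat -> 0 < u k) /\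
  sumR m u = INR m /\
  (forall a b c, In (a, b, c) F ->
     strict_triangle (sqrt (u a)) (sqrt (u b)) (sqrt (u c))).

Definition edge_len (u : nat -> R) (k : nat) : R := sqrt (2 * u k).

(* angle opposite the side of length x in a Euclidean triangle with side
   lengths x, y, z (law of cosines) *)
Definition opp_angle (x y z : R) : R :=
  acos ((y * y + z * z - x * x) / (2 * y * z)).

Definition cot (t : R) : R := cos t / sin t.

Definition face_weight (u : nat -> R) (f : face) (i : nat) : R :=
  let '(a, b, c) := f in
  let da := edge_len u a in
  let db := edge_len u b in
  let dc := edge_len u c in
  (if Nat.eqb a i then / 2 * cot (opp_angle da db dc) else 0) +
  (if Nat.eqb b i then / 2 * cot (opp_angle db da dc) else 0) +
  (if Nat.eqb c i then / 2 * cot (opp_angle dc da db) else 0).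

(* w_i(u): interior edge -> (cot alpha + cot beta)/2, boundary -> cot alpha/2 *)
Definition cot_weight (F : list face) (u : nat -> R) (i : nat) : R :=
  fold_right Rplus 0 (map (fun f => face_weight u f i) F).

Definition integral_is (f : R -> R) (a b I : R) : Prop :=
  exists pr : Riemann_integrable f a b, RiemannInt pr = I.

(* Piecewise smooth: there are knots
   0 = t_0 < t_1 < ... < t_k = 1 and on each [t_j, t_{j+1}] gamma coincides
   with a C^1 map p_j (with derivative dp_j). *)
Definition pw_path_integral (m : nat) (Om : (nat -> R) -> Prop)
    (omega : (nat -> R) -> nat -> R) (x y : nat -> R) (I : R) : Prop :=
  exists (gamma : R -> nat -> R) (k : nat) (t : nat -> R)
         (p dp : nat -> R -> nat -> R) (Ij : nat -> R),
    (1 <= k)%nat /\ t 0%nat = 0 /\ t k = 1 /\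
    (forall j, (j < k)%nat -> t j < t (S j)) /\
    (forall i, (i < m)%nat -> gamma 0 i = x i /\ gamma 1 i = y i) /\
    (forall s, 0 <= s <= 1 -> Om (gamma s)) /\
    (forall j, (j < k)%nat ->
       (forall i, (i < m)%nat ->
          (forall s, derivable_pt_lim (fun r => p j r i) s (dp j s i)) /\
          continuity (fun r => dp j r i)) /\
       (forall s, t j <= s <= t (S j) -> forall i, (i < m)%nat -> gamma s i = p j s i) /\
       integral_is (fun s => sumR m (fun i => omega (p j s) i * dp j s i))
                   (t j) (t (S j)) (Ij j)) /\
    I = fold_right Rplus 0 (map Ij (seq 0 k)).

Definition ones : nat -> R := fun _ => 1.

(* The 1-form is exact.  With [u_k = d_k^2 / 2], Heron's formula gives every face the
   area [A_f(u) = sqrt (heron u_a u_b u_c) / 2], and [dA_f / du_a] is half the cotangent of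
   the angle opposite to [e_a].  Hence [sum_i (wbar_i - w_i(u)) du_i] is the differential of
   [E(u) = sum_i wbar_i u_i - sum_f A_f(u)], so every path integral from [1] to [u] equals
   [E(u) - E(1)]; a straight segment provides one, since [Omega_u] is convex.

   Minimality.  [heron] is a quadratic form of Lorentzian signature, so on its positive cone
   the reversed Cauchy-Schwarz inequality makes [A_f] concave and 1-homogeneous:
   [A_f(u) <= dA_f(ubar) u], with equality only if [u] is proportional to [ubar] on [f].
   Because [w(ubar) = wbar], [sum_i wbar_i u_i = sum_f dA_f(ubar) u], so [E(u) - E(ubar)] is
   the sum of these nonnegative defects ([E(ubar) = 0] by Euler's relation).  If it vanishes,
   the proportionality factors agree across shared edges, hence everywhere by connectedness,
   and the normalisation [sum_k u_k = m] forces [u = ubar]. *)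

From Stdlib Require Import Reals Lra List Lia.
Import ListNotations.
Open Scope R_scope.

Definition sum_over {A : Type} (l : list A) (h : A -> R) : R :=
  fold_right Rplus 0 (map h l).

Section SumOver.
Context {A : Type}.

Lemma sum_over_cons (x : A) l h : sum_over (x :: l) h = h x + sum_over l h.
Proof. reflexivity. Qed.

Lemma sum_over_app (l1 l2 : list A) h :
  sum_over (l1 ++ l2) h = sum_over l1 h + sum_over l2 h.
Proof.
  induction l1 as [|x l1 IH]; simpl app.
  - change (sum_over [] h) with 0. lra.
  - rewrite !sum_over_cons, IH. lra.
Qed.

Lemma sum_over_ext (l : list A) h1 h2 :
  (forall x, In x l -> h1 x = h2 x) -> sum_over l h1 = sum_over l h2.
Proof.
  induction l as [|x l IH]; intros H; [reflexivity|].
  rewrite !sum_over_cons, (H x), IH; [reflexivity | |].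
  - intros y Hy; apply H; right; exact Hy.
  - left; reflexivity.
Qed.

Lemma sum_over_plus (l : list A) h1 h2 :
  sum_over l (fun x => h1 x + h2 x) = sum_over l h1 + sum_over l h2.
Proof. induction l; [unfold sum_over; simpl; lra|]. rewrite !sum_over_cons, IHl; lra. Qed.

Lemma sum_over_minus (l : list A) h1 h2 :
  sum_over l (fun x => h1 x - h2 x) = sum_over l h1 - sum_over l h2.
Proof. induction l; [unfold sum_over; simpl; lra|]. rewrite !sum_over_cons, IHl; lra. Qed.

Lemma sum_over_scal (l : list A) c h :
  sum_over l (fun x => c * h x) = c * sum_over l h.
Proof. induction l; [unfold sum_over; simpl; lra|]. rewrite !sum_over_cons, IHl; lra. Qed.

Lemma sum_over_const0 (l : list A) : sum_over l (fun _ => 0) = 0.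
Proof. induction l; [reflexivity|]. rewrite sum_over_cons, IHl; lra. Qed.

Lemma sum_over_nonneg (l : list A) h :
  (forall x, In x l -> 0 <= h x) -> 0 <= sum_over l h.
Proof.
  induction l as [|x l IH]; intros H; [unfold sum_over; simpl; lra|].
  rewrite sum_over_cons. assert (0 <= h x) by (apply H; left; auto).
  assert (0 <= sum_over l h) by (apply IH; intros; apply H; right; auto). lra.
Qed.

Lemma sum_over_nonneg_eq0 (l : list A) h :
  (forall x, In x l -> 0 <= h x) -> sum_over l h <= 0 -> forall x, In x l -> h x = 0.
Proof.
  induction l as [|y l IH]; intros Hn Hs x Hx; [destruct Hx|].
  rewrite sum_over_cons in Hs.
  assert (0 <= h y) by (apply Hn; left; auto).
  assert (0 <= sum_over l h) by (apply sum_over_nonneg; intros; apply Hn; right; auto).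
  destruct Hx as [<-|Hx]; [lra|].
  apply IH; auto; [intros; apply Hn; right; auto | lra].
Qed.

Lemma derivable_pt_lim_sum_over (l : list A) (g : A -> R -> R) (d : A -> R) s :
  (forall x, In x l -> derivable_pt_lim (g x) s (d x)) ->
  derivable_pt_lim (fun r => sum_over l (fun x => g x r)) s (sum_over l d).
Proof.
  induction l as [|x l IH]; intros H.
  - apply derivable_pt_lim_const.
  - apply derivable_pt_lim_plus; [apply H; left; auto|].
    apply IH; intros; apply H; right; auto.
Qed.

Lemma continuity_pt_sum_over (l : list A) (g : A -> R -> R) s :
  (forall x, In x l -> continuity_pt (g x) s) ->
  continuity_pt (fun r => sum_over l (fun x => g x r)) s.
Proof.
  induction l as [|x l IH]; intros H.
  - apply continuity_pt_const; intros ??; reflexivity.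
  - apply continuity_pt_plus; [apply H; left; auto|].
    apply IH; intros; apply H; right; auto.
Qed.
End SumOver.

Lemma sum_over_comm {A B : Type} (l1 : list A) (l2 : list B) g :
  sum_over l1 (fun x => sum_over l2 (g x))
  = sum_over l2 (fun y => sum_over l1 (fun x => g x y)).
Proof.
  induction l1 as [|x l1 IH].
  - exact (eq_sym (sum_over_const0 l2)).
  - rewrite sum_over_cons, IH, <- sum_over_plus. reflexivity.
Qed.

Lemma sumR_S m f : sumR (S m) f = sumR m f + f m.
Proof.
  change (sum_over (seq 0 (S m)) f = sum_over (seq 0 m) f + f m).
  rewrite seq_S, sum_over_app. unfold sum_over at 2; simpl; lra.
Qed.

Lemma sumR_ext m f g : (forall i, (i < m)%nat -> f i = g i) -> sumR m f = sumR m g.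
Proof.
  intros H. apply (sum_over_ext (seq 0 m)). intros i Hi. apply in_seq in Hi. apply H; lia.
Qed.

Lemma sumR_plus m f g : sumR m (fun i => f i + g i) = sumR m f + sumR m g.
Proof. exact (sum_over_plus (seq 0 m) f g). Qed.

Lemma sumR_minus m f g : sumR m (fun i => f i - g i) = sumR m f - sumR m g.
Proof. exact (sum_over_minus (seq 0 m) f g). Qed.

Lemma sumR_scal m c f : sumR m (fun i => c * f i) = c * sumR m f.
Proof. exact (sum_over_scal (seq 0 m) c f). Qed.

Lemma sumR_zero m : sumR m (fun _ => 0) = 0.
Proof. exact (sum_over_const0 (seq 0 m)). Qed.

Lemma sumR_const1 m : sumR m (fun _ => 1) = INR m.
Proof. induction m; [reflexivity|]. rewrite sumR_S, IHm, S_INR; lra. Qed.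

Lemma sumR_indicator m a g : (a < m)%nat ->
  sumR m (fun i => if Nat.eqb a i then g i else 0) = g a.
Proof.
  induction m; intros H; [lia|]. rewrite sumR_S.
  destruct (Nat.eqb_spec a m) as [->|Hne].
  - rewrite (sumR_ext _ _ (fun _ => 0)).
    + rewrite sumR_zero. lra.
    + intros i Hi. destruct (Nat.eqb_spec m i); [lia | reflexivity].
  - rewrite IHm by lia. lra.
Qed.

Lemma derivable_pt_lim_eq f x l l' :
  derivable_pt_lim f x l -> l = l' -> derivable_pt_lim f x l'.
Proof. intros H <-; exact H. Qed.

Lemma derivable_pt_lim_comp_sqrt g x l : derivable_pt_lim g x l -> 0 < g x ->
  derivable_pt_lim (fun r => sqrt (g r)) x (l / (2 * sqrt (g x))).
Proof.
  intros H hg. eapply derivable_pt_lim_eq.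
  - exact (derivable_pt_lim_comp g sqrt x l _ H (derivable_pt_lim_sqrt _ hg)).
  - unfold Rdiv. ring.
Qed.

Lemma continuity_pt_comp_sqrt g x : continuity_pt g x -> 0 <= g x ->
  continuity_pt (fun r => sqrt (g r)) x.
Proof. intros Cg hg. exact (continuity_pt_comp g sqrt x Cg (continuity_pt_sqrt _ hg)). Qed.

Lemma integral_is_antiderivative (H h g : R -> R) a b : a < b ->
  (forall x, a <= x <= b -> derivable_pt_lim H x (h x)) ->
  (forall x, a <= x <= b -> continuity_pt g x) ->
  (forall x, a <= x <= b -> h x = g x) ->
  integral_is h a b (H b - H a).
Proof.
  intros hab DH Cg Ehg. assert (hle : a <= b) by lra.
  set (prg := continuity_implies_RiemannInt hle Cg).
  assert (prh : Riemann_integrable h a b).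
  { apply (@Riemann_integrable_ext g h a b); [|exact prg].
    intros x Hx. rewrite Rmin_left, Rmax_right in Hx by lra. symmetry; auto. }
  exists prh. rewrite (RiemannInt_P18 prh prg hle) by (intros; apply Ehg; lra).
  set (P := primitive hle (FTC_P1 hle Cg)).
  assert (DP : forall x, a <= x <= b -> derivable_pt_lim P x (g x))
    by (intros; apply RiemannInt_P28; auto).
  assert (Pa : P a = 0).
  { unfold P, primitive. destruct (Rle_dec a a); [|lra]. destruct (Rle_dec a b); [|lra].
    apply RiemannInt_P9. }
  assert (Pb : P b = RiemannInt prg).
  { unfold P, primitive. destruct (Rle_dec a b); [|lra]. destruct (Rle_dec b b); [|lra].
    apply RiemannInt_P5. }
  set (D := fun x => H x - P x).
  assert (DD : forall x, a <= x <= b -> derivable_pt_lim D x 0).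
  { intros x Hx. eapply derivable_pt_lim_eq.
    - apply derivable_pt_lim_minus; [apply DH | apply DP]; exact Hx.
    - rewrite Ehg by exact Hx. ring. }
  assert (prD : forall x, a < x < b -> derivable_pt D x)
    by (intros x Hx; exists 0; apply DD; lra).
  assert (K : constant_D_eq D (fun x => a <= x <= b) (D a)).
  { apply (null_derivative_loc D a b prD).
    - intros x Hx. apply derivable_continuous_pt. exists 0. apply DD; exact Hx.
    - intros x Px. apply derive_pt_eq_0, DD. lra. }
  assert (Kb := K b ltac:(lra)). unfold D in Kb. lra.
Qed.

Definition clamp (a b x : R) : R := Rmax a (Rmin b x).

Lemma clamp_in a b x : a <= b -> a <= clamp a b x <= b.
Proof. intros. unfold clamp, Rmax, Rmin. repeat destruct Rle_dec; lra. Qed.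

Lemma clamp_id a b x : a <= x <= b -> clamp a b x = x.
Proof. intros. unfold clamp, Rmax, Rmin. repeat destruct Rle_dec; lra. Qed.

Lemma continuity_clamp a b x : a <= b -> continuity_pt (clamp a b) x.
Proof.
  intros hab eps Heps. exists eps. split; [exact Heps|].
  intros y [_ Hy]. simpl in *. unfold Rdist in *.
  apply Rle_lt_trans with (Rabs (y - x)); [|exact Hy].
  unfold clamp, Rmax, Rmin. repeat destruct Rle_dec; unfold Rabs; repeat destruct Rcase_abs; lra.
Qed.

Lemma integral_is_unique f a b I J : integral_is f a b I -> integral_is f a b J -> I = J.
Proof. intros [pr1 <-] [pr2 <-]. apply RiemannInt_P5. Qed.

Definition heron (x y z : R) : R := 2 * (x * y + y * z + z * x) - x * x - y * y - z * z.

(* The symmetric bilinear form of the quadratic form [heron]. *)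
Definition heron_polar (v1 v2 v3 x1 x2 x3 : R) : R :=
  (v2 + v3 - v1) * x1 + (v1 + v3 - v2) * x2 + (v1 + v2 - v3) * x3.

Lemma heron_swap12 x y z : heron y x z = heron x y z.
Proof. unfold heron; ring. Qed.

Lemma heron_rot x y z : heron z x y = heron x y z.
Proof. unfold heron; ring. Qed.

Lemma heron_sqr p q r :
  heron (p * p) (q * q) (r * r) = (p + q + r) * (- p + q + r) * (p - q + r) * (p + q - r).
Proof. unfold heron; ring. Qed.

Lemma heron_polar_pos v1 v2 v3 x1 x2 x3 :
  0 < v1 -> 0 < v2 -> 0 < v3 -> 0 < x1 -> 0 < x2 -> 0 < x3 ->
  0 < heron v1 v2 v3 -> 0 < heron x1 x2 x3 -> 0 < heron_polar v1 v2 v3 x1 x2 x3.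
Proof.
  intros hv1 hv2 hv3 hx1 hx2 hx3 hQv hQx.
  (* In centred coordinates [3 heron v = Sv^2 - 6 |d|^2]; apply Cauchy-Schwarz to [d] and [e]. *)
  set (Sv := v1 + v2 + v3). set (Sx := x1 + x2 + x3).
  set (d1 := v1 - Sv / 3). set (d2 := v2 - Sv / 3). set (d3 := v3 - Sv / 3).
  set (e1 := x1 - Sx / 3). set (e2 := x2 - Sx / 3). set (e3 := x3 - Sx / 3).
  assert (Ev : 3 * heron v1 v2 v3 = Sv * Sv - 6 * (d1 * d1 + d2 * d2 + d3 * d3))
    by (unfold d1, d2, d3, Sv, heron; field).
  assert (Ex : 3 * heron x1 x2 x3 = Sx * Sx - 6 * (e1 * e1 + e2 * e2 + e3 * e3))
    by (unfold e1, e2, e3, Sx, heron; field).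
  assert (EB : 3 * heron_polar v1 v2 v3 x1 x2 x3 = Sv * Sx - 6 * (d1 * e1 + d2 * e2 + d3 * e3))
    by (unfold d1, d2, d3, e1, e2, e3, Sv, Sx, heron_polar; field).
  assert (CS : (d1 * e1 + d2 * e2 + d3 * e3) ^ 2
               <= (d1 * d1 + d2 * d2 + d3 * d3) * (e1 * e1 + e2 * e2 + e3 * e3)).
  { assert (h1 := pow2_ge_0 (d1 * e2 - d2 * e1)).
    assert (h2 := pow2_ge_0 (d1 * e3 - d3 * e1)).
    assert (h3 := pow2_ge_0 (d2 * e3 - d3 * e2)).
    nra. }
  assert (hSv : 0 < Sv) by (unfold Sv; lra). assert (hSx : 0 < Sx) by (unfold Sx; lra).
  assert (hN : 0 <= d1 * d1 + d2 * d2 + d3 * d3) by nra.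
  assert (hM : 0 <= e1 * e1 + e2 * e2 + e3 * e3) by nra.
  clearbody Sv Sx d1 d2 d3 e1 e2 e3.
  revert CS Ev Ex EB hN hM.
  generalize (d1 * e1 + d2 * e2 + d3 * e3) (d1 * d1 + d2 * d2 + d3 * d3)
    (e1 * e1 + e2 * e2 + e3 * e3) (heron_polar v1 v2 v3 x1 x2 x3).
  intros Z N M B CS Ev Ex EB hN hM.
  assert (hZ : (6 * Z) ^ 2 < (Sv * Sx) ^ 2) by nra.
  assert (0 < Sv * Sx) by nra.
  destruct (Rlt_or_le (6 * Z) (Sv * Sx)); [lra | nra].
Qed.

Lemma heron_polar_identity v1 v2 v3 x1 x2 x3 :
  let Sv := v1 + v2 + v3 in let Sx := x1 + x2 + x3 in
  Sv * Sv * (heron_polar v1 v2 v3 x1 x2 x3 ^ 2 - heron v1 v2 v3 * heron x1 x2 x3) =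
  2 * heron v1 v2 v3 * ((Sv * x1 - Sx * v1) ^ 2 + (Sv * x2 - Sx * v2) ^ 2 + (Sv * x3 - Sx * v3) ^ 2)
  + 4 * (v1 * (Sv * x1 - Sx * v1) + v2 * (Sv * x2 - Sx * v2) + v3 * (Sv * x3 - Sx * v3)) ^ 2.
Proof. intros Sv Sx. unfold Sv, Sx, heron, heron_polar. ring. Qed.

Lemma heron_reverse_cauchy_schwarz v1 v2 v3 x1 x2 x3 :
  0 < v1 -> 0 < v2 -> 0 < v3 -> 0 < x1 -> 0 < x2 -> 0 < x3 ->
  0 < heron v1 v2 v3 -> 0 < heron x1 x2 x3 ->
  sqrt (heron v1 v2 v3) * sqrt (heron x1 x2 x3) <= heron_polar v1 v2 v3 x1 x2 x3.
Proof.
  intros hv1 hv2 hv3 hx1 hx2 hx3 hQv hQx.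
  assert (hB := heron_polar_pos _ _ _ _ _ _ hv1 hv2 hv3 hx1 hx2 hx3 hQv hQx).
  assert (Hid := heron_polar_identity v1 v2 v3 x1 x2 x3). cbv zeta in Hid.
  assert (hsq : heron v1 v2 v3 * heron x1 x2 x3 <= heron_polar v1 v2 v3 x1 x2 x3 ^ 2).
  { revert Hid.
    set (e1 := (v1 + v2 + v3) * x1 - (x1 + x2 + x3) * v1).
    set (e2 := (v1 + v2 + v3) * x2 - (x1 + x2 + x3) * v2).
    set (e3 := (v1 + v2 + v3) * x3 - (x1 + x2 + x3) * v3).
    intros Hid.
    assert (h1 := pow2_ge_0 e1). assert (h2 := pow2_ge_0 e2). assert (h3 := pow2_ge_0 e3).
    assert (h4 := pow2_ge_0 (v1 * e1 + v2 * e2 + v3 * e3)).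
    assert (0 <= 2 * heron v1 v2 v3 * (e1 ^ 2 + e2 ^ 2 + e3 ^ 2)) by (apply Rmult_le_pos; lra).
    assert (0 < (v1 + v2 + v3) * (v1 + v2 + v3)) by nra.
    nra. }
  rewrite <- sqrt_mult_alt by lra.
  rewrite <- (sqrt_pow2 (heron_polar v1 v2 v3 x1 x2 x3)) by lra.
  apply sqrt_le_1_alt; exact hsq.
Qed.

Lemma heron_reverse_cauchy_schwarz_eq v1 v2 v3 x1 x2 x3 :
  0 < heron v1 v2 v3 -> 0 < heron x1 x2 x3 ->
  sqrt (heron v1 v2 v3) * sqrt (heron x1 x2 x3) = heron_polar v1 v2 v3 x1 x2 x3 ->
  let Sv := v1 + v2 + v3 in let Sx := x1 + x2 + x3 in
  Sv * x1 = Sx * v1 /\ Sv * x2 = Sx * v2 /\ Sv * x3 = Sx * v3.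
Proof.
  intros hQv hQx Heq Sv Sx.
  assert (Hsq : heron_polar v1 v2 v3 x1 x2 x3 ^ 2 = heron v1 v2 v3 * heron x1 x2 x3).
  { rewrite <- Heq, <- sqrt_mult_alt by lra. simpl. rewrite Rmult_1_r. apply sqrt_sqrt. nra. }
  assert (Hid := heron_polar_identity v1 v2 v3 x1 x2 x3). cbv zeta in Hid. fold Sv Sx in Hid.
  rewrite Hsq, Rminus_diag, Rmult_0_r in Hid.
  set (e1 := Sv * x1 - Sx * v1) in *. set (e2 := Sv * x2 - Sx * v2) in *.
  set (e3 := Sv * x3 - Sx * v3) in *.
  assert (h1 := pow2_ge_0 e1). assert (h2 := pow2_ge_0 e2). assert (h3 := pow2_ge_0 e3).
  assert (h4 := pow2_ge_0 (v1 * e1 + v2 * e2 + v3 * e3)).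
  assert (He : e1 ^ 2 + e2 ^ 2 + e3 ^ 2 = 0).
  { assert (0 <= 2 * heron v1 v2 v3 * (e1 ^ 2 + e2 ^ 2 + e3 ^ 2)) by (apply Rmult_le_pos; lra).
    assert (H0 : 2 * heron v1 v2 v3 * (e1 ^ 2 + e2 ^ 2 + e3 ^ 2) = 0) by lra.
    apply Rmult_integral in H0. destruct H0; [lra | assumption]. }
  unfold e1, e2, e3 in *. repeat split; nra.
Qed.

Definition half_cot (x y z : R) : R := (y + z - x) / (2 * sqrt (heron x y z)).

Lemma half_cot_opp_angle x y z : 0 < x -> 0 < y -> 0 < z -> 0 < heron x y z ->
  / 2 * cot (opp_angle (sqrt (2 * x)) (sqrt (2 * y)) (sqrt (2 * z))) = half_cot x y z.
Proof.
  intros hx hy hz hQ. unfold opp_angle, cot, half_cot.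
  assert (Ex : sqrt (2 * x) * sqrt (2 * x) = 2 * x) by (apply sqrt_sqrt; lra).
  assert (Ey : sqrt (2 * y) * sqrt (2 * y) = 2 * y) by (apply sqrt_sqrt; lra).
  assert (Ez : sqrt (2 * z) * sqrt (2 * z) = 2 * z) by (apply sqrt_sqrt; lra).
  assert (py : 0 < sqrt (2 * y)) by (apply sqrt_lt_R0; lra).
  assert (pz : 0 < sqrt (2 * z)) by (apply sqrt_lt_R0; lra).
  set (X := sqrt (2 * x)) in *. set (Y := sqrt (2 * y)) in *. set (Z := sqrt (2 * z)) in *.
  assert (EYZ : (Y * Z) ^ 2 = 4 * y * z)
    by (replace ((Y * Z) ^ 2) with ((Y * Y) * (Z * Z)) by ring; rewrite Ey, Ez; ring).
  replace ((Y * Y + Z * Z - X * X) / (2 * Y * Z)) with ((y + z - x) / (Y * Z))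
    by (rewrite Ex, Ey, Ez; field; lra).
  set (C := (y + z - x) / (Y * Z)).
  assert (HS : 1 - C² = heron x y z / (Y * Z) ^ 2).
  { replace (1 - C²) with (((Y * Z) ^ 2 - (y + z - x) ^ 2) / (Y * Z) ^ 2)
      by (unfold C, Rsqr; field; nra).
    rewrite EYZ. unfold heron. f_equal. ring. }
  assert (HC : -1 <= C <= 1).
  { assert (0 <= 1 - C²) by (rewrite HS; apply Rlt_le, Rdiv_lt_0_compat; nra).
    unfold Rsqr in *. split; nra. }
  rewrite cos_acos, sin_acos by exact HC. rewrite HS.
  rewrite sqrt_div_alt, <- Rsqr_pow2, sqrt_Rsqr by nra.
  assert (0 < sqrt (heron x y z)) by (apply sqrt_lt_R0; lra).
  unfold C. field. split; nra.
Qed.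

Definition admissible_face (u : nat -> R) (f : face) : Prop :=
  let '(a, b, c) := f in 0 < u a /\ 0 < u b /\ 0 < u c /\ 0 < heron (u a) (u b) (u c).

Definition face_area (u : nat -> R) (f : face) : R :=
  let '(a, b, c) := f in sqrt (heron (u a) (u b) (u c)) / 2.

Definition face_area_diff (u du : nat -> R) (f : face) : R :=
  let '(a, b, c) := f in
  half_cot (u a) (u b) (u c) * du a + half_cot (u b) (u a) (u c) * du b
  + half_cot (u c) (u a) (u b) * du c.

Lemma sum_face_weight m u du a b c :
  (a < m)%nat -> (b < m)%nat -> (c < m)%nat -> admissible_face u (a, b, c) ->
  sumR m (fun i => face_weight u (a, b, c) i * du i) = face_area_diff u du (a, b, c).
Proof.
  intros ha hb hc (pa & pb & pc & hQ).
  assert (hQb : 0 < heron (u b) (u a) (u c)) by (rewrite heron_swap12; exact hQ).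
  assert (hQc : 0 < heron (u c) (u a) (u b)) by (rewrite heron_rot; exact hQ).
  unfold face_weight, face_area_diff, edge_len.
  rewrite !half_cot_opp_angle by assumption.
  rewrite (sumR_ext _ _ (fun i =>
      (if Nat.eqb a i then half_cot (u a) (u b) (u c) * du i else 0)
    + (if Nat.eqb b i then half_cot (u b) (u a) (u c) * du i else 0)
    + (if Nat.eqb c i then half_cot (u c) (u a) (u b) * du i else 0))).
  - rewrite !sumR_plus.
    rewrite !(sumR_indicator m _ (fun i => _ * du i)) by assumption. reflexivity.
  - intros i _. destruct (Nat.eqb a i), (Nat.eqb b i), (Nat.eqb c i); ring.
Qed.

Lemma face_area_diff_self u f : admissible_face u f -> face_area_diff u u f = face_area u f.
Proof.
  destruct f as [[a b] c]. intros (pa & pb & pc & hQ).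
  unfold face_area_diff, face_area, half_cot.
  rewrite (heron_swap12 (u a)), (heron_rot (u a)).
  assert (hs : 0 < sqrt (heron (u a) (u b) (u c))) by (apply sqrt_lt_R0; exact hQ).
  assert (E := sqrt_sqrt (heron (u a) (u b) (u c)) ltac:(lra)).
  set (r := sqrt (heron (u a) (u b) (u c))) in *.
  apply Rmult_eq_reg_r with (2 * r); [|lra].
  transitivity (heron (u a) (u b) (u c)); [unfold heron; field; lra|].
  rewrite <- E. field.
Qed.

Lemma derivable_face_area (p dp : R -> nat -> R) s a b c :
  admissible_face (p s) (a, b, c) ->
  derivable_pt_lim (fun r => p r a) s (dp s a) ->
  derivable_pt_lim (fun r => p r b) s (dp s b) ->
  derivable_pt_lim (fun r => p r c) s (dp s c) ->
  derivable_pt_lim (fun r => face_area (p r) (a, b, c)) s (face_area_diff (p s) (dp s) (a, b, c)).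
Proof.
  intros (pa & pb & pc & hQ) Da Db Dc. unfold face_area, face_area_diff, half_cot.
  rewrite (heron_swap12 (p s a)), (heron_rot (p s a)).
  assert (hs : 0 < sqrt (heron (p s a) (p s b) (p s c))) by (apply sqrt_lt_R0; exact hQ).
  eapply derivable_pt_lim_eq.
  - apply derivable_pt_lim_mult; [|apply derivable_pt_lim_const].
    apply derivable_pt_lim_comp_sqrt; [|exact hQ].
    unfold heron.
    repeat first [ eassumption | apply derivable_pt_lim_minus | apply derivable_pt_lim_plus
                 | apply derivable_pt_lim_mult | apply derivable_pt_lim_const ].
  - cbv beta. unfold heron in *. field. lra.
Qed.

Lemma continuity_pt_half_cot (x y z : R -> R) s :
  continuity_pt x s -> continuity_pt y s -> continuity_pt z s -> 0 < heron (x s) (y s) (z s) ->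
  continuity_pt (fun r => half_cot (x r) (y r) (z r)) s.
Proof.
  intros Cx Cy Cz hQ. unfold half_cot.
  assert (0 < sqrt (heron (x s) (y s) (z s))) by (apply sqrt_lt_R0; exact hQ).
  apply continuity_pt_div; [| |lra].
  - apply continuity_pt_minus; [apply continuity_pt_plus|]; assumption.
  - apply continuity_pt_mult; [apply continuity_pt_const; intros ??; reflexivity|].
    apply continuity_pt_comp_sqrt; [|lra]. unfold heron.
    repeat first [ eassumption | apply continuity_pt_minus | apply continuity_pt_plus
                 | apply continuity_pt_mult
                 | (apply continuity_pt_const; intros ??; reflexivity) ].
Qed.

Lemma continuity_face_area_diff (q dq : R -> nat -> R) s a b c :
  admissible_face (q s) (a, b, c) ->
  (forall e, In e [a; b; c] -> continuity_pt (fun r => q r e) s) ->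
  (forall e, In e [a; b; c] -> continuity_pt (fun r => dq r e) s) ->
  continuity_pt (fun r => face_area_diff (q r) (dq r) (a, b, c)) s.
Proof.
  intros (_ & _ & _ & hQ) Cq Cdq.
  assert (hQb : 0 < heron (q s b) (q s a) (q s c)) by (rewrite heron_swap12; exact hQ).
  assert (hQc : 0 < heron (q s c) (q s a) (q s b)) by (rewrite heron_rot; exact hQ).
  unfold face_area_diff.
  repeat apply continuity_pt_plus; apply continuity_pt_mult;
    solve [ apply Cdq; simpl; auto
          | apply continuity_pt_half_cot; auto; apply Cq; simpl; auto ].
Qed.

Lemma face_area_diff_polar ubar u a b c : admissible_face ubar (a, b, c) ->
  face_area_diff ubar u (a, b, c)
  = heron_polar (ubar a) (ubar b) (ubar c) (u a) (u b) (u c)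
    / (2 * sqrt (heron (ubar a) (ubar b) (ubar c))).
Proof.
  intros (_ & _ & _ & hQ). unfold face_area_diff, half_cot, heron_polar.
  rewrite (heron_swap12 (ubar a)), (heron_rot (ubar a)).
  assert (0 < sqrt (heron (ubar a) (ubar b) (ubar c))) by (apply sqrt_lt_R0; exact hQ).
  field. lra.
Qed.

Lemma face_area_le_diff ubar u f : admissible_face ubar f -> admissible_face u f ->
  face_area u f <= face_area_diff ubar u f.
Proof.
  destruct f as [[a b] c]. intros Hb Hu.
  rewrite face_area_diff_polar by exact Hb.
  destruct Hb as (pa & pb & pc & hQ), Hu as (qa & qb & qc & hQ').
  assert (hs : 0 < sqrt (heron (ubar a) (ubar b) (ubar c))) by (apply sqrt_lt_R0; exact hQ).
  assert (RCS := heron_reverse_cauchy_schwarz _ _ _ _ _ _ pa pb pc qa qb qc hQ hQ').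
  unfold face_area.
  replace (sqrt (heron (u a) (u b) (u c)) / 2) with
    (sqrt (heron (ubar a) (ubar b) (ubar c)) * sqrt (heron (u a) (u b) (u c))
     / (2 * sqrt (heron (ubar a) (ubar b) (ubar c)))) by (field; lra).
  unfold Rdiv. apply Rmult_le_compat_r; [|exact RCS].
  left. apply Rinv_0_lt_compat. lra.
Qed.

Lemma face_area_eq_diff ubar u f : admissible_face ubar f -> admissible_face u f ->
  face_area u f = face_area_diff ubar u f ->
  exists r, forall e, In e (face_edges f) -> u e = r * ubar e.
Proof.
  destruct f as [[a b] c]. intros Hb Hu Heq.
  rewrite face_area_diff_polar in Heq by exact Hb.
  destruct Hb as (pa & pb & pc & hQ), Hu as (_ & _ & _ & hQ').
  assert (hs : 0 < sqrt (heron (ubar a) (ubar b) (ubar c))) by (apply sqrt_lt_R0; exact hQ).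
  unfold face_area in Heq.
  destruct (heron_reverse_cauchy_schwarz_eq (ubar a) (ubar b) (ubar c) (u a) (u b) (u c) hQ hQ')
    as (Ea & Eb & Ec).
  { revert Heq hs.
    generalize (heron_polar (ubar a) (ubar b) (ubar c) (u a) (u b) (u c))
      (sqrt (heron (ubar a) (ubar b) (ubar c))) (sqrt (heron (u a) (u b) (u c))).
    intros B sb su Heq hs.
    replace B with (B / (2 * sb) * (2 * sb)) by (field; lra). rewrite <- Heq. field. }
  exists ((u a + u b + u c) / (ubar a + ubar b + ubar c)).
  intros e [<- | [<- | [<- | []]]];
    apply Rmult_eq_reg_l with (ubar a + ubar b + ubar c); try lra; field_simplify; lra.
Qed.

Definition faces_in_range (m : nat) (F : list face) : Prop :=
  forall a b c, In (a, b, c) F -> (a < m)%nat /\ (b < m)%nat /\ (c < m)%nat.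

Lemma faces_in_range_of_surface m F : triangulated_surface m F -> faces_in_range m F.
Proof.
  intros (_ & Hfaces & _) a b c Hin. destruct (Hfaces a b c Hin) as (ha & hb & hc & _). auto.
Qed.

Lemma triangle_convex a0 b0 c0 a1 b1 c1 l :
  0 <= a0 -> 0 <= b0 -> 0 <= c0 -> 0 <= a1 -> 0 <= b1 -> 0 <= c1 -> 0 <= l <= 1 ->
  a0 < b0 + c0 -> a1 < b1 + c1 ->
  sqrt ((1 - l) * a0 ^ 2 + l * a1 ^ 2)
  < sqrt ((1 - l) * b0 ^ 2 + l * b1 ^ 2) + sqrt ((1 - l) * c0 ^ 2 + l * c1 ^ 2).
Proof.
  intros ha0 hb0 hc0 ha1 hb1 hc1 hl t0 t1.
  set (X := (1 - l) * a0 ^ 2 + l * a1 ^ 2).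
  set (Y := (1 - l) * b0 ^ 2 + l * b1 ^ 2). set (Z := (1 - l) * c0 ^ 2 + l * c1 ^ 2).
  set (K := (1 - l) * (b0 * c0) + l * (b1 * c1)).
  assert (hl0 : 0 <= 1 - l) by lra.
  assert (hX : 0 <= X) by (unfold X; nra). assert (hY : 0 <= Y) by (unfold Y; nra).
  assert (hZ : 0 <= Z) by (unfold Z; nra).
  assert (hK : 0 <= K) by (unfold K; apply Rplus_le_le_0_compat; apply Rmult_le_pos; nra).
  assert (hKYZ : K <= sqrt Y * sqrt Z).
  { rewrite <- sqrt_mult_alt by exact hY. rewrite <- (sqrt_pow2 K) by exact hK.
    apply sqrt_le_1_alt.
    assert (Y * Z - K ^ 2 = l * (1 - l) * (b0 * c1 - b1 * c0) ^ 2) by (unfold Y, Z, K; ring).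
    assert (0 <= l * (1 - l) * (b0 * c1 - b1 * c0) ^ 2)
      by (apply Rmult_le_pos; [nra | apply pow2_ge_0]).
    lra. }
  assert (hXK : X < Y + Z + 2 * K).
  { assert (s0 : a0 ^ 2 < (b0 + c0) ^ 2) by nra.
    assert (s1 : a1 ^ 2 < (b1 + c1) ^ 2) by nra.
    replace (Y + Z + 2 * K) with ((1 - l) * (b0 + c0) ^ 2 + l * (b1 + c1) ^ 2)
      by (unfold Y, Z, K; ring).
    unfold X. destruct (Rle_lt_dec 1 l); [replace l with 1 by lra | ]; nra. }
  assert (EY := sqrt_sqrt Y hY). assert (EZ := sqrt_sqrt Z hZ).
  apply Rsqr_incrst_0; [| apply sqrt_pos | apply Rplus_le_le_0_compat; apply sqrt_pos].
  unfold Rsqr. rewrite sqrt_sqrt by exact hX. nra.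
Qed.

Definition segment (x y : nat -> R) (s : R) : nat -> R := fun i => (1 - s) * x i + s * y i.

Section Omega.
Variables (m : nat) (F : list face).
Hypothesis HF : faces_in_range m F.

Lemma admissible_of_Omega u : in_Omega m F u -> forall f, In f F -> admissible_face u f.
Proof.
  intros [Hpos [_ Htri]] [[a b] c] Hin. destruct (HF a b c Hin) as (ha & hb & hc).
  assert (pa := Hpos a ha). assert (pb := Hpos b hb). assert (pc := Hpos c hc).
  destruct (Htri a b c Hin) as (t1 & t2 & t3).
  repeat split; auto.
  rewrite <- (sqrt_sqrt (u a)), <- (sqrt_sqrt (u b)), <- (sqrt_sqrt (u c)) by lra.
  rewrite heron_sqr.
  assert (0 < sqrt (u a)) by (apply sqrt_lt_R0; auto).
  assert (0 < sqrt (u b)) by (apply sqrt_lt_R0; auto).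
  assert (0 < sqrt (u c)) by (apply sqrt_lt_R0; auto).
  repeat apply Rmult_lt_0_compat; lra.
Qed.

Lemma ones_in_Omega : in_Omega m F ones.
Proof.
  unfold ones. split; [|split].
  - intros; lra.
  - apply sumR_const1.
  - intros a b c _. rewrite sqrt_1. unfold strict_triangle. lra.
Qed.

Lemma segment_in_Omega x y s : in_Omega m F x -> in_Omega m F y -> 0 <= s <= 1 ->
  in_Omega m F (segment x y s).
Proof.
  intros [Hx [Sx Tx]] [Hy [Sy Ty]] hs. unfold segment. split; [|split].
  - intros k hk. specialize (Hx k hk). specialize (Hy k hk).
    destruct (Rle_lt_dec 1 s); [replace s with 1 by lra | ]; nra.
  - rewrite sumR_plus, !sumR_scal, Sx, Sy. ring.
  - intros a b c Hin. destruct (HF a b c Hin) as (ha & hb & hc).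
    assert (px := fun k hk => Rlt_le _ _ (Hx k hk)).
    assert (py := fun k hk => Rlt_le _ _ (Hy k hk)).
    rewrite <- (pow2_sqrt (x a)), <- (pow2_sqrt (x b)), <- (pow2_sqrt (x c)),
            <- (pow2_sqrt (y a)), <- (pow2_sqrt (y b)), <- (pow2_sqrt (y c)) by auto.
    destruct (Tx a b c Hin) as (tx1 & tx2 & tx3). destruct (Ty a b c Hin) as (ty1 & ty2 & ty3).
    repeat split; apply triangle_convex; auto using sqrt_pos.
Qed.

End Omega.

Section Energy.
Variables (m : nat) (F : list face) (wbar : nat -> R).
Hypothesis HF : faces_in_range m F.

Definition energy (u : nat -> R) : R :=
  sumR m (fun i => wbar i * u i) - sum_over F (face_area u).

Definition energy_diff (u du : nat -> R) : R :=
  sumR m (fun i => wbar i * du i) - sum_over F (face_area_diff u du).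

Lemma energy_diff_eq u du : (forall f, In f F -> admissible_face u f) ->
  sumR m (fun i => (wbar i - cot_weight F u i) * du i) = energy_diff u du.
Proof.
  intros Hu. unfold energy_diff.
  rewrite (sumR_ext _ _ (fun i => wbar i * du i - sum_over F (fun f => face_weight u f i * du i))).
  - rewrite sumR_minus. f_equal.
    transitivity (sum_over F (fun f => sumR m (fun i => face_weight u f i * du i))).
    + symmetry. exact (sum_over_comm F (seq 0 m) (fun f i => face_weight u f i * du i)).
    + apply sum_over_ext. intros [[a b] c] Hin. destruct (HF a b c Hin) as (ha & hb & hc).
      apply sum_face_weight; auto.
  - intros i _. rewrite Rmult_minus_distr_r. f_equal.
    change (cot_weight F u i) with (sum_over F (fun f => face_weight u f i)).
    rewrite Rmult_comm, <- sum_over_scal.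
    apply sum_over_ext. intros f _. ring.
Qed.

Lemma energy_ext u v : (forall i, (i < m)%nat -> u i = v i) -> energy u = energy v.
Proof.
  intros H. unfold energy. f_equal.
  - apply sumR_ext. intros i hi. rewrite H; auto.
  - apply sum_over_ext. intros [[a b] c] Hin. destruct (HF a b c Hin) as (ha & hb & hc).
    unfold face_area. rewrite !H; auto.
Qed.

Lemma derivable_energy (p dp : R -> nat -> R) s :
  (forall f, In f F -> admissible_face (p s) f) ->
  (forall i, (i < m)%nat -> derivable_pt_lim (fun r => p r i) s (dp s i)) ->
  derivable_pt_lim (fun r => energy (p r)) s (energy_diff (p s) (dp s)).
Proof.
  intros Hp Dp. unfold energy, energy_diff. apply derivable_pt_lim_minus.
  - apply (derivable_pt_lim_sum_over (seq 0 m) (fun i r => wbar i * p r i)).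
    intros i Hi. apply in_seq in Hi.
    eapply derivable_pt_lim_eq.
    + apply derivable_pt_lim_mult; [apply derivable_pt_lim_const | apply Dp; lia].
    + cbv beta. ring.
  - apply (derivable_pt_lim_sum_over F (fun f r => face_area (p r) f)).
    intros [[a b] c] Hin. destruct (HF a b c Hin) as (ha & hb & hc).
    apply derivable_face_area; auto.
Qed.

Lemma continuity_energy_diff (q dq : R -> nat -> R) s :
  (forall f, In f F -> admissible_face (q s) f) ->
  (forall i, (i < m)%nat -> continuity_pt (fun r => q r i) s) ->
  (forall i, (i < m)%nat -> continuity_pt (fun r => dq r i) s) ->
  continuity_pt (fun r => energy_diff (q r) (dq r)) s.
Proof.
  intros Hq Cq Cdq. unfold energy_diff. apply continuity_pt_minus.
  - apply (continuity_pt_sum_over (seq 0 m) (fun i r => wbar i * dq r i)).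
    intros i Hi. apply in_seq in Hi.
    apply continuity_pt_mult; [apply continuity_pt_const; intros ??; reflexivity | apply Cdq; lia].
  - apply (continuity_pt_sum_over F (fun f r => face_area_diff (q r) (dq r) f)).
    intros [[a b] c] Hin. destruct (HF a b c Hin) as (ha & hb & hc).
    apply continuity_face_area_diff; auto;
      intros e [<- | [<- | [<- | []]]]; auto.
Qed.

End Energy.

Lemma knots_increasing (t : nat -> R) k : (forall j, (j < k)%nat -> t j < t (S j)) ->
  forall i j, (i <= j <= k)%nat -> t i <= t j.
Proof.
  intros tinc i j [hij hjk]. induction hij as [|j hij IH]; [lra|].
  pose proof (tinc j ltac:(lia)). pose proof (IH ltac:(lia)). lra.
Qed.

Lemma knots_in_unit (t : nat -> R) k : t 0%nat = 0 -> t k = 1 ->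
  (forall j, (j < k)%nat -> t j < t (S j)) -> forall j, (j <= k)%nat -> 0 <= t j <= 1.
Proof.
  intros t0 tk tinc j hj. rewrite <- t0, <- tk.
  split; apply (knots_increasing t k tinc); lia.
Qed.

Section PathIntegral.
Variables (m : nat) (F : list face) (wbar : nat -> R).
Hypothesis HF : faces_in_range m F.

(* The integrand is only known to be continuous where the path is admissible, i.e. on
   [a, b]; precomposing with the clamp to [a, b] extends it continuously to all of R. *)
Lemma integral_is_energy (p dp : R -> nat -> R) a b : a < b ->
  (forall i, (i < m)%nat ->
     (forall s, derivable_pt_lim (fun r => p r i) s (dp s i)) /\ continuity (fun r => dp r i)) ->
  (forall s, a <= s <= b -> forall f, In f F -> admissible_face (p s) f) ->
  integral_is (fun s => sumR m (fun i => (wbar i - cot_weight F (p s) i) * dp s i)) a b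
    (energy m F wbar (p b) - energy m F wbar (p a)).
Proof.
  intros hab Hp Hadm.
  apply (integral_is_antiderivative (fun s => energy m F wbar (p s)) _
           (fun s => energy_diff m F wbar (p (clamp a b s)) (dp (clamp a b s)))); [exact hab | | |].
  - intros x Hx. rewrite energy_diff_eq by auto.
    apply derivable_energy; auto. intros i hi. apply (Hp i hi).
  - intros x Hx.
    apply (continuity_pt_comp (clamp a b) (fun r => energy_diff m F wbar (p r) (dp r)) x);
      [apply continuity_clamp; lra|].
    apply continuity_energy_diff; auto.
    + apply Hadm, clamp_in; lra.
    + intros i hi. apply derivable_continuous_pt. exists (dp (clamp a b x) i). apply (Hp i hi).
    + intros i hi. apply (Hp i hi).
  - intros x Hx. rewrite clamp_id by exact Hx. apply energy_diff_eq; auto.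
Qed.

Lemma path_integral_energy x y I :
  pw_path_integral m (in_Omega m F) (fun mu i => wbar i - cot_weight F mu i) x y I ->
  I = energy m F wbar y - energy m F wbar x.
Proof.
  intros (gamma & k & t & p & dp & Ij & hk & t0 & tk & tinc & Hend & Hom & Hpc & HI).
  assert (Tunit := knots_in_unit t k t0 tk tinc).
  assert (HIj : forall j, (j < k)%nat ->
             Ij j = energy m F wbar (gamma (t (S j))) - energy m F wbar (gamma (t j))).
  { intros j hj. destruct (Hpc j hj) as (Hp & Hg & Hint).
    assert (Tj := Tunit j ltac:(lia)). assert (TSj := Tunit (S j) hj). assert (tj := tinc j hj).
    assert (Hadm : forall s, t j <= s <= t (S j) -> forall f, In f F -> admissible_face (p j s) f).
    { intros s hs [[a b] c] Hin. destruct (HF a b c Hin) as (ha & hb & hc).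
      assert (Hs := admissible_of_Omega m F HF (gamma s) (Hom s ltac:(lra)) _ Hin).
      unfold admissible_face in *. rewrite <- !Hg by assumption. exact Hs. }
    rewrite (integral_is_unique _ _ _ _ _ Hint
               (integral_is_energy (p j) (dp j) (t j) (t (S j)) tj Hp Hadm)).
    f_equal; apply (energy_ext m F wbar HF); intros i hi; symmetry; apply Hg; auto; lra. }
  assert (Tel : forall n, (n <= k)%nat ->
             sumR n Ij = energy m F wbar (gamma (t n)) - energy m F wbar (gamma (t 0%nat))).
  { induction n as [|n IH]; intros hn; [simpl; unfold sumR; simpl; ring|].
    rewrite sumR_S, IH, HIj by lia. ring. }
  rewrite HI. change (fold_right Rplus 0 (map Ij (seq 0 k))) with (sumR k Ij).
  rewrite Tel, tk, t0 by lia.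
  f_equal; apply (energy_ext m F wbar HF); intros i hi; apply Hend; auto.
Qed.

Lemma path_integral_segment x y :
  in_Omega m F x -> in_Omega m F y ->
  pw_path_integral m (in_Omega m F) (fun mu i => wbar i - cot_weight F mu i) x y
    (energy m F wbar y - energy m F wbar x).
Proof.
  intros Hx Hy.
  assert (Hd : forall i, (i < m)%nat ->
    (forall s, derivable_pt_lim (fun r => segment x y r i) s (y i - x i)) /\
    continuity (fun _ : R => y i - x i)).
  { intros i _. split.
    - intros s. unfold segment. eapply derivable_pt_lim_eq.
      + apply derivable_pt_lim_plus; apply derivable_pt_lim_mult;
          solve [ apply derivable_pt_lim_const | apply derivable_pt_lim_minus;
                  [apply derivable_pt_lim_const | apply derivable_pt_lim_id]
                | apply derivable_pt_lim_id ].
      + cbv beta. ring.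
    - intros r. apply continuity_pt_const. intros ??; reflexivity. }
  exists (segment x y), 1%nat, INR, (fun _ => segment x y), (fun _ _ i => y i - x i),
    (fun _ => energy m F wbar y - energy m F wbar x).
  split; [lia|]. split; [reflexivity|]. split; [reflexivity|].
  split; [intros j hj; replace j with 0%nat by lia; simpl; lra|].
  split; [intros i _; unfold segment; split; ring|].
  split; [intros s hs; apply segment_in_Omega; auto|].
  split; [|simpl; ring].
  intros j hj. replace j with 0%nat by lia. split; [exact Hd|]. split; [reflexivity|].
  replace (energy m F wbar y - energy m F wbar x)
    with (energy m F wbar (segment x y 1) - energy m F wbar (segment x y 0))
    by (f_equal; apply (energy_ext m F wbar HF); intros i _; unfold segment; ring).
  apply integral_is_energy; [simpl; lra | exact Hd |].
  intros s hs f Hin. apply (admissible_of_Omega m F HF); [|exact Hin].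
  apply segment_in_Omega; auto.
Qed.

End PathIntegral.

Lemma edge_in_some_face F i :
  edge_incidence F i <> 0%nat -> exists f, In f F /\ In i (face_edges f).
Proof.
  induction F as [|f G IH]; intros H; [exfalso; apply H; reflexivity|].
  unfold edge_incidence in H. simpl in H. fold (edge_incidence G i) in H.
  destruct (filter (fun e => Nat.eqb e i) (face_edges f)) as [|e l] eqn:Ef.
  - destruct (IH H) as [g [Hg Hi]]. exists g. split; [right|]; assumption.
  - exists f. split; [left; reflexivity|].
    assert (He : In e (filter (fun e => Nat.eqb e i) (face_edges f)))
      by (rewrite Ef; left; reflexivity).
    apply filter_In in He. destruct He as [He Hei]. apply Nat.eqb_eq in Hei. subst. exact He.
Qed.

(* The ratio [u / ubar] on a face is read off its first edge; faces sharing an edge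
   have the same ratio, so it is constant along the connected adjacency graph. *)
Lemma proportional_of_connected m F (u ubar : nat -> R) :
  faces_in_range m F -> F <> nil ->
  (forall k, (k < m)%nat -> 0 < ubar k) ->
  (forall x y, (x < length F)%nat -> (y < length F)%nat ->
     Relation_Operators.clos_refl_trans nat (faces_adjacent F) x y) ->
  (forall i, (i < m)%nat -> exists f, In f F /\ In i (face_edges f)) ->
  (forall f, In f F -> exists r, forall e, In e (face_edges f) -> u e = r * ubar e) ->
  exists r, forall i, (i < m)%nat -> u i = r * ubar i.
Proof.
  intros HF Hne Hpos Hconn Hcov Hprop.
  set (d := (0, 0, 0)%nat : face).
  set (first_edge := fun f : face => let '(a, _, _) := f in a).
  set (ratio := fun x => u (first_edge (nth x F d)) / ubar (first_edge (nth x F d))).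
  assert (Hrange : forall f e, In f F -> In e (face_edges f) -> (e < m)%nat).
  { intros [[a b] c] e Hin He. destruct (HF a b c Hin) as (ha & hb & hc).
    destruct He as [<- | [<- | [<- | []]]]; assumption. }
  assert (Hratio : forall x e, (x < length F)%nat -> In e (face_edges (nth x F d)) ->
                     u e = ratio x * ubar e).
  { intros x e hx He. assert (Hin : In (nth x F d) F) by (apply nth_In; exact hx).
    destruct (Hprop _ Hin) as [r Hr].
    assert (H1 : In (first_edge (nth x F d)) (face_edges (nth x F d)))
      by (destruct (nth x F d) as [[a b] c]; left; reflexivity).
    assert (p1 := Hpos _ (Hrange _ _ Hin H1)).
    unfold ratio. rewrite (Hr _ H1), (Hr e He). field. lra. }
  assert (Hadj : forall x y, Relation_Operators.clos_refl_trans nat (faces_adjacent F) x y ->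
                   ratio x = ratio y).
  { intros x y Hc. induction Hc as [x y (hx & hy & e & He1 & He2) | x | x y z _ IH1 _ IH2].
    - assert (pe := Hpos _ (Hrange _ _ (nth_In F d hx) He1)).
      assert (E1 := Hratio x e hx He1). assert (E2 := Hratio y e hy He2).
      apply Rmult_eq_reg_r with (ubar e); lra.
    - reflexivity.
    - congruence. }
  assert (hF0 : (0 < length F)%nat) by (destruct F; [congruence | simpl; lia]).
  exists (ratio 0%nat). intros i hi. destruct (Hcov i hi) as [f [Hf Hi]].
  destruct (In_nth F f d Hf) as [x [hx Ex]].
  rewrite (Hadj 0%nat x (Hconn 0%nat x hF0 hx)). apply Hratio; [exact hx|]. rewrite Ex. exact Hi.
Qed.

Section CriticalPoint.
Variables (m : nat) (F : list face) (wbar ubar : nat -> R).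
Hypothesis HF : faces_in_range m F.
Hypothesis Hadm : forall f, In f F -> admissible_face ubar f.
Hypothesis Hw : forall i, (i < m)%nat -> cot_weight F ubar i = wbar i.

Lemma energy_eq_sum_area_defect v :
  energy m F wbar v = sum_over F (fun f => face_area_diff ubar v f - face_area v f).
Proof.
  assert (E := energy_diff_eq m F wbar HF ubar v Hadm).
  rewrite (sumR_ext _ _ (fun _ => 0)) in E by (intros i hi; rewrite Hw by exact hi; ring).
  rewrite sumR_zero in E.
  unfold energy_diff in E. unfold energy. rewrite sum_over_minus. lra.
Qed.

Lemma energy_critical_point : energy m F wbar ubar = 0.
Proof.
  rewrite energy_eq_sum_area_defect.
  rewrite (sum_over_ext F _ (fun _ => 0)); [apply sum_over_const0|].
  intros f Hin. rewrite face_area_diff_self by auto. ring.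
Qed.

Lemma energy_nonpos_proportional u : (forall f, In f F -> admissible_face u f) ->
  energy m F wbar u <= 0 ->
  forall f, In f F -> exists r, forall e, In e (face_edges f) -> u e = r * ubar e.
Proof.
  intros Hu Hle f Hin. rewrite energy_eq_sum_area_defect in Hle.
  assert (Hdef : forall g, In g F -> 0 <= face_area_diff ubar u g - face_area u g).
  { intros g Hg. pose proof (face_area_le_diff ubar u g (Hadm g Hg) (Hu g Hg)). lra. }
  assert (Z := sum_over_nonneg_eq0 F _ Hdef Hle f Hin).
  apply face_area_eq_diff; auto. lra.
Qed.

End CriticalPoint.

Lemma energy_strict_min m F wbar ubar u :
  triangulated_surface m F -> in_Omega m F ubar ->
  (forall i, (i < m)%nat -> cot_weight F ubar i = wbar i) ->
  in_Omega m F u -> (exists i, (i < m)%nat /\ u i <> ubar i) ->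
  energy m F wbar ubar < energy m F wbar u.
Proof.
  intros HS Hb Hw Hu [i0 [hi0 Hne]].
  assert (HF := faces_in_range_of_surface m F HS).
  destruct HS as (HFne & _ & Hinc & Hconn).
  assert (Hbadm := admissible_of_Omega m F HF ubar Hb).
  rewrite (energy_critical_point m F wbar ubar HF Hbadm Hw).
  destruct (Rlt_or_le 0 (energy m F wbar u)) as [Hlt | Hle]; [exact Hlt | exfalso].
  assert (Hcov : forall i, (i < m)%nat -> exists f, In f F /\ In i (face_edges f)).
  { intros i hi. apply edge_in_some_face. destruct (Hinc i hi) as [E | E]; rewrite E; lia. }
  destruct Hb as [Hbpos [Hbsum _]].
  destruct (proportional_of_connected m F u ubar HF HFne Hbpos Hconn Hcov
              (energy_nonpos_proportional m F wbar ubar HF Hbadm Hw u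
                 (admissible_of_Omega m F HF u Hu) Hle)) as [r Hr].
  assert (Hr1 : r = 1).
  { destruct Hu as [_ [Husum _]].
    assert (hm : 0 < INR m) by (apply lt_0_INR; lia).
    rewrite (sumR_ext _ _ (fun i => r * ubar i)), sumR_scal, Hbsum in Husum by exact Hr.
    apply Rmult_eq_reg_r with (INR m); lra. }
  apply Hne. rewrite Hr, Hr1 by exact hi0. ring.
Qed.

Theorem theorem5 (m : nat) (F : list face) (wbar ubar : nat -> R)
  (HS : triangulated_surface m F)
  (Hubar : in_Omega m F ubar)
  (Hw : forall i, (i < m)%nat -> cot_weight F ubar i = wbar i) :
  let omega := fun (mu : nat -> R) (i : nat) => wbar i - cot_weight F mu i in
  (forall u, in_Omega m F u ->
     exists I, pw_path_integral m (in_Omega m F) omega ones u I) /\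
  (forall u I J,
     pw_path_integral m (in_Omega m F) omega ones u I ->
     pw_path_integral m (in_Omega m F) omega ones u J -> I = J) /\
  (forall u I J, in_Omega m F u -> (exists i, (i < m)%nat /\ u i <> ubar i) ->
     pw_path_integral m (in_Omega m F) omega ones ubar I ->
     pw_path_integral m (in_Omega m F) omega ones u J -> I < J).
Proof.
  intros omega. assert (HF := faces_in_range_of_surface m F HS).
  assert (Hval := path_integral_energy m F wbar HF).
  split; [|split].
  - intros u Hu. eexists. apply path_integral_segment; auto using ones_in_Omega.
  - intros u I J HI HJ. rewrite (Hval _ _ _ HI), (Hval _ _ _ HJ). reflexivity.
  - intros u I J Hu Hne HI HJ. rewrite (Hval _ _ _ HI), (Hval _ _ _ HJ).
    pose proof (energy_strict_min m F wbar ubar u HS Hubar Hw Hu Hne). lra.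
Qed.
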